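(* Let $G\neq K_4$ be a connected, claw-free cubic graph all of whose units are triangle-units. Then there exists an independent set in $G$ that contains a vertex from every triangle of $G$.
   Context: A graph is claw-free if it has no induced subgraph isomorphic to $K_{1,3}$; it is cubic if every vertex has degree $3$. A diamond is an induced subgraph isomorphic to $K_4$ minus one edge. For a connected, claw-free, cubic graph $G\neq K_4$, the vertex set $V(G)$ can be uniquely partitioned into sets each of which induces a triangle or a diamond in $G$; the parts are called units, a triangle-unit being a part inducing a triangle and a diamond-unit a part inducing a diamond. *)

From mathcomp Require Import all_boot.
Set Implicit Arguments. Unset Strict Implicit. Unset Printing Implicit Defensive.

Section Graphs.
Variables (V : finType) (e : rel V).

Definition simple_graph : Prop := symmetric e /\ irreflexive e.

Definition cubic : Prop := forall v : V, #|[set w | e v w]| = 3.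

Definition connected_graph : Prop := forall x y : V, connect e x y.

Definition claw_free : Prop :=
  ~ exists v a b c : V,
      [/\ e v a, e v b, e v c & [/\ a != b, a != c & b != c]] /\
      [/\ ~~ e a b, ~~ e a c & ~~ e b c].

Definition is_K4 : Prop :=
  #|V| = 4 /\ forall x y : V, x != y -> e x y.

(* number of (unordered) edges inside U, counted as ordered pairs *)
Definition inner_arcs (U : {set V}) : nat :=
  #|[set p : V * V | [&& p.1 \in U, p.2 \in U & e p.1 p.2]]|.

Definition induces_triangle (U : {set V}) : Prop :=
  #|U| = 3 /\ {in U &, forall x y, x != y -> e x y}.

(* U induces a diamond (K_4 minus one edge): 4 vertices, exactly 5 edges *)
Definition induces_diamond (U : {set V}) : Prop :=
  #|U| = 4 /\ inner_arcs U = 10.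

Definition unit_partition (P : {set {set V}}) : Prop :=
  partition P [set: V] /\
  forall U, U \in P -> induces_triangle U \/ induces_diamond U.

Definition is_triangle (a b c : V) : Prop := [/\ e a b, e a c & e b c].

Definition independent (S : {set V}) : Prop :=
  {in S &, forall x y, ~~ e x y}.

End Graphs.

From mathcomp Require Import all_boot.
Set Implicit Arguments. Unset Strict Implicit. Unset Printing Implicit Defensive.

(* Every vertex has exactly one neighbour outside its triangle, its [outer]
   neighbour, so we need a set with exactly one vertex in each triangle that
   contains no pair of outer neighbours.  We solve the more general problem of a
   set W split into blocks (the fibres of a labelling), with a fixed-point-free
   involution [mate] whose pairs play the role of the outer edges, a vertex
   being free when its mate lies outside W.  A solution exists when every block
   has a second vertex or a free vertex, a Hall-type condition ([has_slack]).
   Induct on W and pick x in W.  If mate x is not in another block of W, delete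
   the block of x and add x to a solution for the rest.  Otherwise delete x and
   mate x and merge their two blocks, which keeps the condition; the merged
   block gets a representative from one of the two old blocks, and the other
   old block takes its vertex of the pair {x, mate x}. *)

Definition relabel (T : Type) (L : eqType) (l1 l2 : L) (lab : T -> L) (v : T) : L :=
  if lab v == l1 then l2 else lab v.

Lemma mem_pair_cases (L : eqType) (l1 l2 p q r : L) :
  p \in [:: l1; l2] -> q \in [:: l1; l2] -> r \in [:: l1; l2] -> p != q ->
  r = p \/ r = q.
Proof. by rewrite !inE => /orP[]/eqP-> /orP[]/eqP-> /orP[]/eqP->; rewrite ?eqxx //; auto. Qed.

Section IndependentTransversal.
Variables (T : finType) (L : eqType) (mate : T -> T).
Hypotheses (mateK : involutive mate) (mate_neq : forall x, mate x != x).

Definition has_slack (W : {set T}) (lab : T -> L) : Prop :=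
  {in W, forall v, exists2 z, z \in W & lab z = lab v /\ (z != v \/ mate z \notin W)}.

Definition indep_transversal (W : {set T}) (lab : T -> L) (A : {set T}) : Prop :=
  [/\ A \subset W, {in W, forall v, exists2 a, a \in A & lab a = lab v},
      {in A &, injective lab} & {in A, forall a, mate a \notin A}].

Lemma has_slack_restrict (W : {set T}) lab (p : pred L) :
  has_slack W lab -> has_slack [set v in W | p (lab v)] lab.
Proof.
move=> slackW v; rewrite inE => /andP[Wv pv].
have [z Wz [lab_z z_v]] := slackW v Wv.
exists z; first by rewrite inE Wz lab_z pv.
split=> //; case: z_v => [|mz]; [left | right] => //.
by apply: contra mz; rewrite inE => /andP[].
Qed.

Lemma has_slack_matched (W : {set T}) lab x :
  has_slack W lab -> x \in W -> mate x \in W ->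
  exists2 z, z \in W & lab z = lab x /\ z != x.
Proof.
move=> slackW Wx Wmx; have [z Wz [lab_z [z_x | mz]]] := slackW x Wx.
  by exists z.
by exists z => //; split=> //; apply: contraNneq mz => ->.
Qed.

Section Contraction.
Variables (W : {set T}) (lab : T -> L) (x : T).
Hypotheses (Wx : x \in W) (Wmx : mate x \in W).
Local Notation W' := (W :\: [set x; mate x]).
Local Notation lab' := (relabel (lab (mate x)) (lab x) lab).
Local Notation merged v := (lab v \in [:: lab (mate x); lab x]).

Lemma mem_contract v : (v \in W') = [&& v != x, v != mate x & v \in W].
Proof. by rewrite !inE negb_or andbA. Qed.

Lemma relabel_merged v : (lab' v == lab x) = merged v.
Proof. by rewrite /relabel !inE; case: ifP => [/eqP-> | _]; rewrite ?eqxx ?orbT. Qed.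

Lemma relabel_unmerged v : ~~ merged v -> lab' v = lab v.
Proof. by rewrite /relabel !inE negb_or => /andP[/negbTE-> _]. Qed.

Lemma unmerged_contract v : v \in W -> ~~ merged v -> v \in W'.
Proof.
move=> Wv; rewrite mem_contract Wv andbT !inE negb_or => /andP[vmx vx].
by apply/andP; split; [apply: contraNneq vx | apply: contraNneq vmx] => ->.
Qed.

Lemma has_slack_contract :
  lab (mate x) != lab x -> has_slack W lab -> has_slack W' lab'.
Proof.
move=> lab_xy slackW v W'v.
have Wv : v \in W by move: W'v; rewrite mem_contract => /and3P[].
have [zx Wzx [lab_zx zx_x]] := has_slack_matched slackW Wx Wmx.
have Wmmx : mate (mate x) \in W by rewrite mateK.
have [zy Wzy [lab_zy zy_y]] := has_slack_matched slackW Wmx Wmmx.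
case: (boolP (merged v)) => [mv | umv]; last first.
  have [z Wz [lab_z z_v]] := slackW v Wv.
  have umz : ~~ merged z by rewrite lab_z.
  exists z; first exact: unmerged_contract.
  rewrite !relabel_unmerged // lab_z; split=> //.
  case: z_v => [|mz]; [left | right] => //.
  by apply: contra mz; rewrite mem_contract => /and3P[].
have lab'_merged z : merged z -> lab' z = lab x.
  by move=> mz; apply/eqP; rewrite relabel_merged.
have lab'_v z : merged z -> lab' z = lab' v by move=> mz; rewrite !lab'_merged.
have zxW' : zx \in W'.
  by rewrite mem_contract zx_x Wzx andbT; apply: contraNneq lab_xy => <-; rewrite lab_zx.
have zyW' : zy \in W'.
  rewrite mem_contract zy_y Wzy !andbT.
  by apply: contraNneq lab_xy => zyx; rewrite -lab_zy zyx.
have mzx : merged zx by rewrite lab_zx !inE eqxx orbT.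
have mzy : merged zy by rewrite lab_zy !inE eqxx.
have [zxv | zx_v] := eqVneq zx v.
  exists zy => //; split; [exact: lab'_v | left].
  by rewrite -zxv; apply: contraNneq lab_xy => zyx; rewrite -lab_zy zyx lab_zx.
by exists zx => //; split; [exact: lab'_v | left].
Qed.

Lemma indep_transversal_contract A' a u :
  indep_transversal W' lab' A' -> a \in A' -> lab' a = lab x ->
  u \in [set x; mate x] -> lab u != lab a -> indep_transversal W lab (u |: A').
Proof.
move=> [sA'W' hitA' injA' indepA'] A'a lab'a u_xy lab_ua.
have notA' w : w \in [set x; mate x] -> w \notin A'.
  move=> xyw; apply/negP => /(subsetP sA'W'); rewrite mem_contract.
  by case/set2P: xyw => ->; rewrite eqxx ?andbF.
have merged_xy w : w \in [set x; mate x] -> merged w.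
  by case/set2P=> ->; rewrite !inE eqxx ?orbT.
have ma : merged a by rewrite -relabel_merged lab'a.
have mu := merged_xy u u_xy.
have merged_cases v : merged v -> lab v = lab u \/ lab v = lab a.
  by move=> mv; apply: mem_pair_cases mu ma mv lab_ua.
have A'_not_u b : b \in A' -> lab b != lab u.
  move=> A'b; apply: contra_neq lab_ua => lab_bu.
  have mb : merged b by rewrite lab_bu.
  rewrite -lab_bu; congr lab; apply: injA' => //; apply/eqP.
  by rewrite lab'a relabel_merged.
split.
- rewrite subUset sub1set (subset_trans sA'W' (subsetDl _ _)) andbT.
  by case/set2P: u_xy => ->.
- move=> v Wv; case: (boolP (merged v)) => [/merged_cases[] | umv].
  + by exists u; rewrite ?setU11.
  + by exists a; rewrite ?setU1r.
  have [b A'b lab'b] := hitA' v (unmerged_contract Wv umv).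
  have umb : ~~ merged b by rewrite -relabel_merged lab'b relabel_merged.
  by exists b; rewrite ?setU1r // -relabel_unmerged // lab'b relabel_unmerged.
- move=> b c; rewrite !in_setU1 => /orP[/eqP-> | A'b] /orP[/eqP-> | A'c] //.
  + by move=> lab_uc; move: (A'_not_u c A'c); rewrite lab_uc eqxx.
  + by move=> lab_bu; move: (A'_not_u b A'b); rewrite lab_bu eqxx.
  by move=> lab_bc; apply: injA' => //; rewrite /relabel lab_bc.
- have mate_u : mate u \in [set x; mate x].
    by case/set2P: u_xy => ->; rewrite !inE ?mateK eqxx ?orbT.
  move=> b; rewrite !in_setU1 negb_or => /orP[/eqP-> | A'b].
    by rewrite mate_neq notA'.
  rewrite indepA' // andbT; apply/eqP => mate_b.
  by have := notA' _ mate_u; rewrite -mate_b mateK A'b.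
Qed.

End Contraction.

Lemma indep_transversal_add_block (W : {set T}) lab x A' :
  x \in W -> mate x \notin [set v in W | lab v != lab x] ->
  indep_transversal [set v in W | lab v != lab x] lab A' ->
  indep_transversal W lab (x |: A').
Proof.
move=> Wx mate_x [sA' hitA' injA' indepA'].
have lab_A' b : b \in A' -> lab b != lab x by move/(subsetP sA'); rewrite inE => /andP[].
split.
- rewrite subUset sub1set Wx; apply: subset_trans sA' _.
  by apply/subsetP => v; rewrite inE => /andP[].
- move=> v Wv; have [lab_vx | lab_vx] := eqVneq (lab v) (lab x).
    by exists x; rewrite ?setU11.
  have Wxv : v \in [set v in W | lab v != lab x] by rewrite inE Wv lab_vx.
  by have [b A'b lab_b] := hitA' v Wxv; exists b; rewrite ?setU1r.
- move=> b c; rewrite !in_setU1 => /orP[/eqP-> | A'b] /orP[/eqP-> | A'c] //.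
  + by move=> lab_xc; move: (lab_A' c A'c); rewrite lab_xc eqxx.
  + by move=> lab_bx; move: (lab_A' b A'b); rewrite lab_bx eqxx.
  exact: injA'.
- move=> b; rewrite !in_setU1 negb_or => /orP[/eqP-> | A'b].
    by rewrite mate_neq; apply: contra mate_x; apply: (subsetP sA').
  rewrite indepA' // andbT; apply/eqP => mate_b.
  by move: mate_x; rewrite -{1}mate_b mateK (subsetP sA' _ A'b).
Qed.

Theorem has_slack_indep_transversal (W : {set T}) lab :
  has_slack W lab -> exists A, indep_transversal W lab A.
Proof.
have [n] := ubnP #|W|; elim: n W lab => // n IH W lab /ltnSE leWn slackW.
have [-> | [x Wx]] := set_0Vmem W.
  by exists set0; split; rewrite ?sub0set // => v; rewrite inE.
have shrink (W' : {set T}) : x \notin W' -> W' \subset W -> #|W'| < n.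
  move=> W'x sW'W; apply: leq_trans leWn; apply: proper_card.
  by apply/properP; split=> //; exists x.
set Wnx := [set v in W | lab v != lab x].
have sWnxW : Wnx \subset W by apply/subsetP => v; rewrite inE => /andP[].
have x_Wnx : x \notin Wnx by rewrite inE eqxx andbF.
have [Wnx_mate | mate_x] := boolP (mate x \in Wnx); last first.
  have slackWnx := has_slack_restrict (p := predC1 (lab x)) slackW.
  have [A' tA'] := IH Wnx lab (shrink _ x_Wnx sWnxW) slackWnx.
  by exists (x |: A'); apply: indep_transversal_add_block.
have /andP[Wmx lab_mx] : (mate x \in W) && (lab (mate x) != lab x).
  by move: Wnx_mate; rewrite inE.
have x_W' : x \notin W :\: [set x; mate x] by rewrite mem_contract eqxx.
have slackW' := has_slack_contract Wx Wmx lab_mx slackW.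
have [A' tA'] := IH _ _ (shrink _ x_W' (subsetDl _ _)) slackW'.
have [z Wz [lab_z z_x]] := has_slack_matched slackW Wx Wmx.
have W'z : z \in W :\: [set x; mate x].
  by rewrite mem_contract z_x Wz andbT; apply: contraNneq lab_mx => <-; rewrite lab_z.
have [_ hitA' _ _] := tA'.
have [a A'a lab'a] := hitA' z W'z.
exists ((if lab a == lab x then mate x else x) |: A').
apply: indep_transversal_contract tA' A'a _ _ _ => //.
- by rewrite lab'a /relabel lab_z eq_sym (negbTE lab_mx).
- by case: ifP; rewrite !inE eqxx ?orbT.
by case: ifP => [/eqP-> | /negbT]; rewrite // eq_sym.
Qed.
End IndependentTransversal.

Section TriangleUnits.
Variables (V : finType) (e : rel V) (P : {set {set V}}).
Hypotheses (e_sym : symmetric e) (e_irr : irreflexive e) (e_cubic : cubic e)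
  (P_part : partition P [set: V]) (P_tri : forall U, U \in P -> induces_triangle e U).

Lemma mem_block x : x \in pblock P x.
Proof. by rewrite mem_pblock (cover_partition P_part) inE. Qed.

Lemma block_triangle x : induces_triangle e (pblock P x).
Proof. by apply: P_tri; rewrite pblock_mem // (cover_partition P_part) inE. Qed.

Lemma same_block x y : y \in pblock P x -> pblock P y = pblock P x.
Proof. by case/and3P: P_part => _ tiP _; apply: same_pblock. Qed.

Lemma block_sym x y : (y \in pblock P x) = (x \in pblock P y).
Proof. by apply/idP/idP => /same_block ->; exact: mem_block. Qed.

Lemma block_adj x y : y \in pblock P x -> e x y = (x != y).
Proof.
move=> Bxy; have [_ adj] := block_triangle x.
by case: eqVneq => [<-|]; [exact: e_irr | exact: adj (mem_block x) Bxy].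
Qed.

Lemma card_block_D1 x : #|pblock P x :\ x| = 2.
Proof. by have [] := block_triangle x; rewrite (cardsD1 x) mem_block => -[]. Qed.

Definition outer (x : V) : V := odflt x [pick y | e x y && (y \notin pblock P x)].

Lemma outerE x y : e x y && (y \notin pblock P x) = (y == outer x).
Proof.
have inner : [set w | e x w] :&: pblock P x = pblock P x :\ x.
  apply/setP => w; rewrite !inE; case: (boolP (w \in pblock P x)) => Bxw.
    by rewrite !andbT block_adj // eq_sym.
  by rewrite !andbF.
have : #|[set w | e x w] :\: pblock P x| == 1.
  by rewrite cardsD inner card_block_D1 e_cubic.
case/cards1P => z outer_set.
have in_outer w : e x w && (w \notin pblock P x) = (w == z).
  by rewrite -in_set1 -outer_set !inE andbC.
suff -> : outer x = z by [].
rewrite /outer; case: pickP => [w | none]; first by rewrite in_outer => /eqP.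
by have := none z; rewrite in_outer eqxx.
Qed.

Lemma outer_adj x : e x (outer x).
Proof. by have /andP[] := etrans (outerE x (outer x)) (eqxx _). Qed.

Lemma outer_notin_block x : outer x \notin pblock P x.
Proof. by have /andP[] := etrans (outerE x (outer x)) (eqxx _). Qed.

Lemma outerK : involutive outer.
Proof.
move=> x; apply/esym/eqP.
by rewrite -outerE e_sym outer_adj block_sym outer_notin_block.
Qed.

Lemma outer_neq x : outer x != x.
Proof. by apply: contraNneq (outer_notin_block x) => ->; exact: mem_block. Qed.

Lemma adjE x y : e x y = (y \in pblock P x) && (x != y) || (y == outer x).
Proof.
have [Bxy | nBxy] /= := boolP (y \in pblock P x); last by rewrite -outerE nBxy andbT.
rewrite block_adj //; have [yo | _] := eqVneq y (outer x); last by rewrite orbF.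
by move: (outer_notin_block x); rewrite -yo Bxy.
Qed.

Lemma triangle_in_block a b c : is_triangle e a b c -> b \in pblock P a.
Proof.
case=> ab ac bc; apply/negPn/negP => nBab.
have b_outer : b = outer a by apply/eqP; rewrite -outerE ab nBab.
have Bac : c \in pblock P a.
  apply/negPn/negP => nBac.
  have /eqP c_outer : c == outer a by rewrite -outerE ac nBac.
  by move: bc; rewrite b_outer c_outer e_irr.
have /eqP : b == outer c by rewrite -outerE e_sym bc (same_block Bac) nBab.
rewrite b_outer => /(can_inj outerK) ca.
by move: ac; rewrite -ca e_irr.
Qed.

Lemma triangle_block a b c : is_triangle e a b c -> pblock P a = [set a; b; c].
Proof.
move=> abc; have [ab ac bc] := abc.
have acb : is_triangle e a c b by split; rewrite // e_sym.
have neq x y : e x y -> x != y by apply: contraTneq => ->; rewrite e_irr.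
apply/esym/eqP; rewrite eqEcard; apply/andP; split.
  apply/subsetP => v; rewrite !inE -orbA => /or3P[] /eqP->.
  - exact: mem_block.
  - exact: triangle_in_block abc.
  - exact: triangle_in_block acb.
have [-> _] := block_triangle a.
by rewrite -setUA cardsU1 cards2 !inE negb_or !neq.
Qed.

Lemma has_slack_blocks : has_slack outer [set: V] (pblock P).
Proof.
move=> v _; have : 0 < #|pblock P v :\ v| by rewrite card_block_D1.
case/card_gt0P => z; rewrite !inE => /andP[z_v Bvz].
by exists z; rewrite ?inE //; split; [rewrite (same_block Bvz) | left].
Qed.

Lemma indep_transversal_independent A :
  indep_transversal outer [set: V] (pblock P) A -> independent e A.
Proof.
move=> [_ _ injA indepA] x y Ax Ay; rewrite adjE negb_or.
apply/andP; split; last by apply: contraNneq (indepA x Ax) => <-.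
apply/nandP; case: (boolP (y \in pblock P x)) => Bxy; [right | by left].
by rewrite negbK; apply/eqP/injA; rewrite // (same_block Bxy).
Qed.

Lemma indep_transversal_meets_triangles A a b c :
  indep_transversal outer [set: V] (pblock P) A -> is_triangle e a b c ->
  [|| a \in A, b \in A | c \in A].
Proof.
move=> [_ hitA _ _] tri; have [s As Bs] := hitA a (in_setT a).
have : s \in [set a; b; c] by rewrite -(triangle_block tri) -Bs mem_block.
by rewrite !inE -orbA => /or3P[] /eqP<-; rewrite As ?orbT.
Qed.

Lemma independent_triangle_transversal :
  exists S : {set V}, independent e S /\
    forall a b c, is_triangle e a b c -> [|| a \in S, b \in S | c \in S].
Proof.
have [A tA] := has_slack_indep_transversal outerK outer_neq has_slack_blocks.
exists A; split; first exact: indep_transversal_independent tA.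
by move=> a b c; apply: indep_transversal_meets_triangles tA.
Qed.

End TriangleUnits.

Theorem lemma3p9 (V : finType) (e : rel V) :
  simple_graph e -> connected_graph e -> claw_free e -> cubic e ->
  ~ is_K4 e ->
  (exists P : {set {set V}},
      unit_partition e P /\ forall U, U \in P -> induces_triangle e U) ->
  exists S : {set V}, independent e S /\
    forall a b c : V, is_triangle e a b c -> [|| a \in S, b \in S | c \in S].
Proof.
move=> [e_sym e_irr] _ _ e_cubic _ [P [[P_part _] P_tri]].
exact: (independent_triangle_transversal (P := P)).
Qed.
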